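(* Let $V$ be a finite set. Let $\mathcal{E}:=\{\hat X\in\mathbb{S}^{\{0\}\cup V}_+ : \hat X_{ii}=1\ \forall i\in\{0\}\cup V\}$, $\mathcal{E}':=\{\hat X\in\mathcal{E} : (e_0+e_i)^{\mathsf T}\hat X(e_0+e_j)\ge 0\ \forall ij\in\binom{V}{2}\}$, and $\mathcal{E}'':=\{\hat X\in\mathcal{E} : (e_0-e_i)^{\mathsf T}\hat X(e_0-e_j)\ge 0\ \forall ij\in\binom{V}{2}\}$. Let $\hat{\mathcal{C}}\in\{\mathcal{E},\mathcal{E}',\mathcal{E}''\}$. Then a point $\hat X$ of $\hat{\mathcal{C}}$ is a vertex of $\hat{\mathcal{C}}$ if and only if $\operatorname{rank}(\hat X)=1$. Thus the vertices of $\hat{\mathcal{C}}$ are precisely the matrices $(1\oplus x_S)(1\oplus x_S)^{\mathsf T}$ where $x_S=\chi^S-\chi^{V\setminus S}$ for some $S\subseteq V$.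
   Context: $0$ is a new index not in $V$; $\mathbb{S}^{W}_+$ denotes real symmetric positive semidefinite matrices indexed by $W$, with trace inner product; $e_i$ are standard basis vectors of $\mathbb{R}^{\{0\}\cup V}$. $\chi^S\in\{0,1\}^V$ is the incidence vector of $S$; $1\oplus x\in\mathbb{R}^{\{0\}\cup V}$ has $0$-entry $1$. For a convex set $\mathcal{C}$ in a finite-dimensional space $\mathbb{E}$ and $\bar x\in\mathcal{C}$, the normal cone is $N_{\mathcal{C}}(\bar x):=\{c : \langle c,x\rangle\le\langle c,\bar x\rangle\ \forall x\in\mathcal{C}\}$; $\bar x$ is a vertex if $\dim N_{\mathcal{C}}(\bar x)=\dim\mathbb{E}$. *)

From HB Require Import structures.
From mathcomp Require Import all_boot all_order all_algebra.
From mathcomp Require Import reals.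
Set Implicit Arguments. Unset Strict Implicit. Unset Printing Implicit Defensive.
Import Order.TTheory GRing.Theory Num.Theory.
Local Open Scope ring_scope.

(* V = 'I_n ; {0} ∪ V = 'I_n.+1 with index 0 = ord0 and i ∈ V ↦ lift ord0 i. *)
Section Defs.
Variables (R : realType) (n : nat).
Notation M := 'M[R]_(n.+1).

Definition idx (i : 'I_n) : 'I_n.+1 := lift ord0 i.

Definition e_ (k : 'I_n.+1) : 'cV[R]_(n.+1) := delta_mx k 0.

Definition qform (u : 'cV[R]_(n.+1)) (X : M) (v : 'cV[R]_(n.+1)) : R :=
  (u^T *m X *m v) 0 0.

Definition symmetric (X : M) : Prop := X^T = X.

Definition psd (X : M) : Prop :=
  symmetric X /\ forall v : 'cV[R]_(n.+1), 0 <= qform v X v.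

Definition ellE (X : M) : Prop := psd X /\ forall k : 'I_n.+1, X k k = 1.

(* E' and E'' ; ij ranges over unordered pairs, encoded by i < j *)
Definition ellE' (X : M) : Prop :=
  ellE X /\ forall i j : 'I_n, (i < j)%N ->
    0 <= qform (e_ ord0 + e_ (idx i)) X (e_ ord0 + e_ (idx j)).

Definition ellE'' (X : M) : Prop :=
  ellE X /\ forall i j : 'I_n, (i < j)%N ->
    0 <= qform (e_ ord0 - e_ (idx i)) X (e_ ord0 - e_ (idx j)).

Definition tip (A B : M) : R := \tr (A^T *m B).

Definition normal_cone (C : M -> Prop) (Xbar : M) (c : M) : Prop :=
  symmetric c /\ forall X, C X -> tip c X <= tip c Xbar.

(* dim N = dim E: the normal cone (a convex cone containing 0, so its
   affine hull is its linear span) spans the whole space of symmetric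
   matrices. *)
Definition full_dim (N : M -> Prop) : Prop :=
  exists s : seq M, (forall c, c \in s -> N c) /\
    forall A : M, symmetric A -> A \in <<s>>%VS.

Definition vertex (C : M -> Prop) (Xbar : M) : Prop :=
  C Xbar /\ full_dim (normal_cone C Xbar).

Definition one_plus_xS (S : {set 'I_n}) : 'cV[R]_(n.+1) :=
  \col_k (match unlift ord0 k with
          | Some i => if i \in S then 1 else -1
          | None => 1
          end).

End Defs.

From Pilot Require Import Defs.
From HB Require Import structures.
From mathcomp Require Import all_boot all_order all_algebra.
From mathcomp Require Import reals.
From mathcomp Require Import ring lra.
Import Order.TTheory GRing.Theory Num.Theory.
Local Open Scope ring_scope.
Set Implicit Arguments. Unset Strict Implicit. Unset Printing Implicit Defensive.

(* A cut matrix x x^T (x a +-1 vector with x_0 = 1) lies in all three sets and has rank one.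
   Since |Z_ij| <= 1 on the elliptope, each x_i x_j (E_ij + E_ji) is normal to the set at x x^T,
   and these matrices span the symmetric matrices, so x x^T is a vertex.  Conversely a point X
   of the elliptope whose 0-th row is +-1 is a cut matrix (e_i - X_0i e_0 is isotropic), and a
   rank-one X has such a row.  If |X_0k| < 1, pick for every i a direction eta_i that is
   X-orthogonal to e_i, all of the same X-norm h, and let A(t)^T send e_i to a e_i + b eta_i
   with a^2 + h b^2 = 1.  The congruences A(t) X A(t)^T form a curve in the elliptope through X;
   it stays in E' (resp. E'') because the vectors e_0 + e_j (resp. e_0 - e_j) are eigenvectors
   of A(t)^T with eigenvalues near 1.  Its tangent D at X has D_0k = 2 (1 - X_0k^2) <> 0 and is
   orthogonal to every normal vector at X, so the normal cone does not span. *)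

Section QuadraticForm.
Variables (R : realType) (n : nat).
Implicit Types (X A : 'M[R]_n.+1) (u v w : 'cV[R]_n.+1).

Lemma qformDl u1 u2 X v : qform (u1 + u2) X v = qform u1 X v + qform u2 X v.
Proof. by rewrite /qform linearD /= !mulmxDl mxE. Qed.

Lemma qformDr u X v1 v2 : qform u X (v1 + v2) = qform u X v1 + qform u X v2.
Proof. by rewrite /qform mulmxDr mxE. Qed.

Lemma qformZl a u X v : qform (a *: u) X v = a * qform u X v.
Proof. by rewrite /qform linearZ /= -!scalemxAl mxE. Qed.

Lemma qformZr a u X v : qform u X (a *: v) = a * qform u X v.
Proof. by rewrite /qform -scalemxAr mxE. Qed.

Lemma qformBl u1 u2 X v : qform (u1 - u2) X v = qform u1 X v - qform u2 X v.
Proof. by rewrite qformDl -scaleN1r qformZl mulN1r. Qed.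

Lemma qformBr u X v1 v2 : qform u X (v1 - v2) = qform u X v1 - qform u X v2.
Proof. by rewrite qformDr -scaleN1r qformZr mulN1r. Qed.

Lemma qform_e X i j : qform (e_ R i) X (e_ R j) = X i j.
Proof. by rewrite /qform /e_ trmx_delta -rowE -colE !mxE. Qed.

Lemma qformC X u v : Defs.symmetric X -> qform u X v = qform v X u.
Proof.
move=> symX; have scalar_tr (M : 'M[R]_1) : M 0 0 = M^T 0 0 by rewrite mxE.
by rewrite /qform scalar_tr !trmx_mul trmxK symX mulmxA.
Qed.

Lemma qform_congr A X u v :
  qform u (A *m X *m A^T) v = qform (A^T *m u) X (A^T *m v).
Proof. by rewrite /qform trmx_mul trmxK !mulmxA. Qed.

Lemma psd_qform0 X u : psd X -> qform u X u = 0 -> forall w, qform w X u = 0.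
Proof.
move=> [symX X_ge0] u0 w; set b := qform w X u; set g := qform w X w.
have g_ge0 : 0 <= g by apply: X_ge0.
have := X_ge0 (u + (- b / (g + 1)) *: w).
rewrite !qformDl !qformDr !qformZl !qformZr (qformC u w symX) u0 -/b -/g.
have -> : 0 + - b / (g + 1) * b + (- b / (g + 1) * b + - b / (g + 1) * (- b / (g + 1) * g))
    = - (b ^+ 2 * (g + 2)) / (g + 1) ^+ 2.
  by field; rewrite gt_eqF // ltr_wpDl.
rewrite pmulr_lge0 ?invr_gt0 ?exprn_gt0 ?ltr_wpDl // oppr_ge0.
move=> b_le0; apply/eqP; rewrite -sqrf_eq0 eq_le sqr_ge0 andbT.
by rewrite -(pmulr_lle0 _ (_ : 0 < g + 2)) ?ltr_wpDl.
Qed.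

Lemma ellE_sym X : ellE X -> Defs.symmetric X.
Proof. by case=> [[]]. Qed.

Lemma ellE_symE X i j : ellE X -> X j i = X i j.
Proof. by move=> /ellE_sym symX; rewrite -{1}symX mxE. Qed.

Lemma ellE_entry_bound X i j : ellE X -> -1 <= X i j <= 1.
Proof.
move=> ellX; have [[_ X_ge0] X1] := ellX.
have := X_ge0 (e_ R i + e_ R j); have := X_ge0 (e_ R i - e_ R j).
rewrite !qformBl !qformBr !qformDl !qformDr !qform_e !X1 (ellE_symE i j ellX).
by move=> *; apply/andP; split; lra.
Qed.

End QuadraticForm.

Section TraceInnerProduct.
Variables (R : realType) (n : nat).
Implicit Types (Z c d : 'M[R]_n.+1).

Lemma tipDl c d Z : tip (c + d) Z = tip c Z + tip d Z.
Proof. by rewrite /tip linearD /= mulmxDl mxtraceD. Qed.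

Lemma tipZl a c Z : tip (a *: c) Z = a * tip c Z.
Proof. by rewrite /tip linearZ /= -scalemxAl mxtraceZ. Qed.

Lemma tipDr c Z1 Z2 : tip c (Z1 + Z2) = tip c Z1 + tip c Z2.
Proof. by rewrite /tip mulmxDr mxtraceD. Qed.

Lemma tipBr c Z1 Z2 : tip c (Z1 - Z2) = tip c Z1 - tip c Z2.
Proof. by rewrite /tip mulmxBr linearB. Qed.

Lemma tipZr a c Z : tip c (a *: Z) = a * tip c Z.
Proof. by rewrite /tip -scalemxAr mxtraceZ. Qed.

Lemma tip_suml (I : Type) (r : seq I) (P : pred I) (F : I -> 'M[R]_n.+1) Z :
  tip (\sum_(i <- r | P i) F i) Z = \sum_(i <- r | P i) tip (F i) Z.
Proof.
elim/big_rec2: _ => [|i y1 y2 _ <-]; last by rewrite tipDl.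
by rewrite /tip linear0 mul0mx mxtrace0.
Qed.

Lemma tip_delta i j Z : tip (delta_mx i j) Z = Z i j.
Proof.
rewrite /tip trmx_delta /mxtrace (bigD1 j) //= big1 => [|k /negbTE kj].
  rewrite addr0 mxE (bigD1 i) //= big1 ?mxE ?eqxx ?mul1r ?addr0 // => l /negbTE li.
  by rewrite mxE li andbF mul0r.
by rewrite mxE big1 // => l _; rewrite mxE kj mul0r.
Qed.

Lemma tip_self_eq0 Z : tip Z Z = 0 -> Z = 0.
Proof.
have sq_ge0 j : 0 <= \sum_i Z i j ^+ 2 by apply: sumr_ge0 => i _; apply: sqr_ge0.
have -> : tip Z Z = \sum_j \sum_i Z i j ^+ 2.
  rewrite /tip /mxtrace; apply: eq_bigr => j _; rewrite mxE.
  by apply: eq_bigr => i _; rewrite mxE expr2.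
move=> /psumr_eq0P sum0; apply/matrixP => i j; rewrite mxE.
have /psumr_eq0P col0 := sum0 (fun j _ => sq_ge0 j) j isT.
by apply/eqP; rewrite -sqrf_eq0 col0 // => k _; apply: sqr_ge0.
Qed.

Lemma full_dim_normal_orth (C : 'M[R]_n.+1 -> Prop) X D :
  full_dim (normal_cone C X) -> Defs.symmetric D ->
  (forall c, normal_cone C X c -> tip c D = 0) -> D = 0.
Proof.
move=> [s [s_normal s_span]] symD orthD.
have D_span : D \in <<in_tuple s>>%VS by apply: s_span.
apply: tip_self_eq0; rewrite {1}(coord_span D_span).
rewrite tip_suml big1 // => i _.
by rewrite tipZl orthD ?mulr0 //; apply: s_normal; rewrite mem_nth.
Qed.

End TraceInnerProduct.

Lemma sym_delta_decomp (F : numFieldType) m (A : 'M[F]_m) : A^T = A ->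
  A = \sum_i \sum_j (A i j / 2) *: (delta_mx i j + delta_mx j i).
Proof.
move=> symA.
have trA : A^T = \sum_i \sum_j A i j *: delta_mx j i.
  rewrite {1}[A]matrix_sum_delta linear_sum; apply: eq_bigr => i _.
  by rewrite linear_sum; apply: eq_bigr => j _; rewrite linearZ /= trmx_delta.
transitivity (2^-1 *: (A + A^T)).
  by rewrite symA -mulr2n -scaler_nat scalerA mulVf ?pnatr_eq0 ?scale1r.
rewrite trA {1}[A]matrix_sum_delta -big_split scaler_sumr; apply: eq_bigr => i _.
rewrite -big_split scaler_sumr; apply: eq_bigr => j _ /=.
by rewrite -scalerDr scalerA mulrC.
Qed.

Section CutMatrix.
Variables (R : realType) (n : nat).
Implicit Types (S : {set 'I_n}) (C : 'M[R]_n.+1 -> Prop).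
Notation xS S := (one_plus_xS R S).

Definition cutm S : 'M[R]_n.+1 := xS S *m (xS S)^T.

Lemma one_plus_xS_sign S i : xS S i 0 = 1 \/ xS S i 0 = -1.
Proof. by rewrite mxE; case: unlift => [j|]; [case: (j \in S); [left|right]|left]. Qed.

Lemma one_plus_xS_sqr S i : xS S i 0 * xS S i 0 = 1.
Proof. by case: (one_plus_xS_sign S i) => ->; rewrite ?mulr1 ?mulrNN ?mulr1. Qed.

Lemma one_plus_xS0 S : xS S ord0 0 = 1.
Proof. by rewrite mxE unlift_none. Qed.

Lemma cutmE S i j : cutm S i j = xS S i 0 * xS S j 0.
Proof. by rewrite /cutm mxE big_ord1 [_^T _ _]mxE. Qed.

Lemma qform_cutm S u v :
  qform u (cutm S) v = (u^T *m xS S) 0 0 * (v^T *m xS S) 0 0.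
Proof.
rewrite /qform /cutm mulmxA -mulmxA mxE big_ord1; congr (_ * _).
have scalar_tr (M : 'M[R]_1) : M^T 0 0 = M 0 0 by rewrite mxE.
by rewrite -[(v^T *m _)]trmxK trmx_mul trmxK scalar_tr.
Qed.

Lemma cutm_ellE S : ellE (cutm S).
Proof.
split; [split|] => [|u|i]; first by rewrite /Defs.symmetric /cutm trmx_mul trmxK.
  by rewrite qform_cutm -expr2 sqr_ge0.
by rewrite cutmE one_plus_xS_sqr.
Qed.

Lemma cutm_ellE' S : ellE' (cutm S).
Proof.
split=> [|i j _]; first exact: cutm_ellE.
rewrite !qformDl !qformDr !qform_e !cutmE one_plus_xS0.
by case: (one_plus_xS_sign S (idx i)) => ->; case: (one_plus_xS_sign S (idx j)) => ->; lra.
Qed.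

Lemma cutm_ellE'' S : ellE'' (cutm S).
Proof.
split=> [|i j _]; first exact: cutm_ellE.
rewrite !qformBl !qformBr !qform_e !cutmE one_plus_xS0.
by case: (one_plus_xS_sign S (idx i)) => ->; case: (one_plus_xS_sign S (idx j)) => ->; lra.
Qed.

Lemma rank_cutm S : \rank (cutm S) = 1%N.
Proof.
apply/eqP; rewrite eqn_leq (leq_trans (mxrankM_maxl _ _)) ?rank_leq_col //=.
rewrite lt0n mxrank_eq0; apply/eqP => /matrixP /(_ ord0 ord0).
by rewrite cutmE one_plus_xS0 mxE mulr1 => /eqP; rewrite oner_eq0.
Qed.

Definition cut_normal S i j : 'M[R]_n.+1 :=
  (xS S i 0 * xS S j 0) *: (delta_mx i j + delta_mx j i).

Lemma cut_normalP C S i j : (forall Z, C Z -> ellE Z) -> C (cutm S) ->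
  normal_cone C (cutm S) (cut_normal S i j).
Proof.
move=> C_ellE _; split.
  by rewrite /Defs.symmetric /cut_normal linearZ linearD /= !trmx_delta addrC.
move=> Z /C_ellE ellZ; rewrite !tipZl !tipDl !tip_delta !cutmE (ellE_symE i j ellZ).
have := ellE_entry_bound i j ellZ.
by case: (one_plus_xS_sign S i) => ->; case: (one_plus_xS_sign S j) => ->;
  move=> /andP[]; lra.
Qed.

Lemma cutm_vertex C S : (forall Z, C Z -> ellE Z) -> C (cutm S) -> vertex C (cutm S).
Proof.
move=> C_ellE C_cut; split => //.
exists [seq cut_normal S p.1 p.2 | p <- enum {: 'I_n.+1 * 'I_n.+1}]; split.
  by move=> c /mapP[[i j] _ ->]; apply: cut_normalP.
move=> A /sym_delta_decomp ->.
apply: memv_suml => i _; apply: memv_suml => j _.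
have -> : A i j / 2 *: (delta_mx i j + delta_mx j i) =
    (A i j / 2 * (xS S i 0 * xS S j 0)) *: cut_normal S i j.
  have sign_sqr : xS S i 0 * xS S j 0 * (xS S i 0 * xS S j 0) = 1.
    by rewrite mulrACA !one_plus_xS_sqr mulr1.
  by rewrite scalerA -(mulrA (A i j / 2)) sign_sqr mulr1.
by apply/memvZ/memv_span/mapP; exists (i, j); rewrite ?mem_enum.
Qed.

End CutMatrix.

Section CutCharacterisation.
Variables (R : realType) (n : nat).
Implicit Types (X : 'M[R]_n.+1).

Lemma ellE_cutm X : ellE X -> (forall j, X ord0 (idx j) ^+ 2 = 1) ->
  X = cutm R [set j | X ord0 (idx j) == 1].
Proof.
move=> ellX row0_sqr; have [[symX _] X1] := ellX.
have x0_sqr i : X ord0 i ^+ 2 = 1.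
  by case: (unliftP ord0 i) => [j ->|->]; rewrite ?row0_sqr ?X1 ?expr1n.
have xS_row0 i : one_plus_xS R [set j | X ord0 (idx j) == 1] i 0 = X ord0 i.
  rewrite mxE; case: (unliftP ord0 i) => [j ->|->]; last by rewrite X1.
  rewrite inE; case: eqP => // /eqP x0j_neq1.
  by have /eqP := row0_sqr j; rewrite sqrf_eq1 (negbTE x0j_neq1) => /eqP.
apply/matrixP => a i; rewrite cutmE !xS_row0.
have isotropic : qform (e_ R i - X ord0 i *: e_ R ord0) X (e_ R i - X ord0 i *: e_ R ord0) = 0.
  rewrite !qformBl !qformBr !qformZl !qformZr !qform_e !X1 (ellE_symE ord0 i ellX).
  by move: (x0_sqr i); rewrite expr2 => sqr1; rewrite mulr1 sqr1; ring.
have := psd_qform0 (proj1 ellX) isotropic (e_ R a).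
rewrite qformBr qformZr !qform_e mulrC (ellE_symE ord0 a ellX).
by move=> /eqP; rewrite subr_eq0 => /eqP.
Qed.

Lemma rank1_ellE_row0_sqr X : ellE X -> \rank X = 1%N ->
  forall j, X ord0 (idx j) ^+ 2 = 1.
Proof.
move=> ellX rankX j; have [_ X1] := ellX.
move: (col_base X) (row_base X) (mulmx_base X); rewrite rankX => u v uv.
have X_uv a b : X a b = u a 0 * v 0 b by rewrite -uv mxE big_ord1.
have := X1 ord0; have := X1 (idx j).
rewrite expr2 -{1}(ellE_symE ord0 (idx j) ellX) !X_uv.
move=> diag_j diag_0; rewrite -[RHS]mulr1 -{1}diag_j -diag_0; ring.
Qed.

End CutCharacterisation.

Section RationalRotation.
Variables (R : realFieldType) (h : R).
Hypothesis h_ge0 : 0 <= h.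
Implicit Types (t c T G : R).

(* Rational parametrisation of the ellipse [a ^+ 2 + b ^+ 2 * h = 1]; for [h = 1]
   these are [cos] and [sin] of twice [atan t]. *)
Definition rcos t := (1 - t ^+ 2 * h) / (1 + t ^+ 2 * h).
Definition rsin t := 2 * t / (1 + t ^+ 2 * h).

Lemma rden_gt0 t : 0 < 1 + t ^+ 2 * h.
Proof. by have := mulr_ge0 (sqr_ge0 t) h_ge0; lra. Qed.

Lemma rcos_rsin t : rcos t ^+ 2 + rsin t ^+ 2 * h = 1.
Proof. by rewrite /rcos /rsin; field; rewrite gt_eqF ?rden_gt0. Qed.

Lemma rcosN t : rcos (- t) = rcos t.
Proof. by rewrite /rcos sqrrN. Qed.

Lemma rsinN t : rsin (- t) = - rsin t.
Proof. by rewrite /rsin sqrrN mulrN mulNr. Qed.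

Lemma rcosD_rsin_ge0 t c :
  `|t| * (1 + h + 2 * `|c|) <= 1 -> 0 <= rcos t + rsin t * c.
Proof.
move=> t_small.
have -> : rcos t + rsin t * c = (1 - t ^+ 2 * h + 2 * t * c) / (1 + t ^+ 2 * h).
  by rewrite /rcos /rsin; field; rewrite gt_eqF ?rden_gt0.
apply: divr_ge0; last exact/ltW/rden_gt0.
have th : 0 <= `|t| * h by rewrite mulr_ge0.
have tc : 0 <= `|t| * `|c| by rewrite mulr_ge0.
have t1 : `|t| <= 1 by lra.
have t2 : t ^+ 2 * h <= `|t| * h.
  by rewrite -(real_normK (num_real t)) ler_wpM2r // expr2 ler_piMl.
have tc_lb : - (2 * t * c) <= 2 * (`|t| * `|c|).
  by rewrite -mulrA -mulrN ler_wpM2l // -normrM -normrN ler_norm.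
by have := normr_ge0 t; nra.
Qed.

Lemma eq0_of_small_bound T K d : 0 < d ->
  (forall t, 0 < t <= d -> `|T| <= t * K) -> T = 0.
Proof.
move=> d_gt0 bound; apply/normr0_eq0/eqP; rewrite eq_le normr_ge0 andbT.
have K_ge0 : 0 <= K.
  by rewrite -(pmulr_rge0 _ d_gt0) (le_trans (normr_ge0 T)) // bound ?d_gt0 ?lexx.
rewrite leNgt; apply/negP => T_gt0.
(* at [t = min d (|T| / (2 K + 1))] the bound gives [|T| <= |T| / 2] *)
set t := Num.min d (`|T| / (2 * K + 1)).
have t_gt0 : 0 < t by rewrite lt_min d_gt0 divr_gt0 //; lra.
have tK : t * (2 * K + 1) <= `|T|.
  by rewrite -ler_pdivlMr ?ge_min ?lexx ?orbT //; lra.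
have := bound t; rewrite t_gt0 ge_min lexx /= => /(_ isT).
by nra.
Qed.

Lemma rotation_first_order T G d : 0 < d ->
  (forall t, `|t| <= d -> rcos t * rsin t * T + rsin t ^+ 2 * G <= 0) -> T = 0.
Proof.
move=> d_gt0 normal_ineq.
apply: (@eq0_of_small_bound T (2 * `|G| + h * `|T|) (Num.min d 1)).
  by rewrite lt_min d_gt0 ltr01.
move=> t /andP[t_gt0]; rewrite le_min => /andP[td t1].
have {}td : `|t| <= d by rewrite ger0_norm // ltW.
have q_gt0 := rden_gt0 t.
have scale_gt0 : 0 < 2 * t / (1 + t ^+ 2 * h) ^+ 2.
  by rewrite divr_gt0 ?exprn_gt0 // mulr_gt0.
have := normal_ineq t td.
have -> : rcos t * rsin t * T + rsin t ^+ 2 * G =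
    2 * t / (1 + t ^+ 2 * h) ^+ 2 * ((1 - t ^+ 2 * h) * T + 2 * t * G).
  by rewrite /rcos /rsin; field; rewrite gt_eqF.
rewrite pmulr_rle0 // => ineq_pos.
have := normal_ineq (- t); rewrite normrN rcosN rsinN => /(_ td).
have -> : rcos t * - rsin t * T + (- rsin t) ^+ 2 * G =
    2 * t / (1 + t ^+ 2 * h) ^+ 2 * (- ((1 - t ^+ 2 * h) * T) + 2 * t * G).
  by rewrite /rcos /rsin; field; rewrite gt_eqF.
rewrite pmulr_rle0 // => ineq_neg.
have tG : - (t * G) <= t * `|G|.
  by rewrite -mulrN ler_wpM2l ?(ltW t_gt0) // -normrN ler_norm.
have t2 : t ^+ 2 * (h * `|T|) <= t * (h * `|T|).
  by rewrite ler_wpM2r ?mulr_ge0 // expr2 ler_piMl // ltW.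
have main : (1 - t ^+ 2 * h) * `|T| <= 2 * (t * `|G|).
  by have [T_ge0|T_lt0] := lerP 0 T; [rewrite ger0_norm|rewrite ltr0_norm]; nra.
by nra.
Qed.

End RationalRotation.

Definition rowsmx (R : ringType) m (f : 'I_m -> 'cV[R]_m) : 'M[R]_m :=
  \matrix_(i, l) f i l 0.

Lemma rowsmxT_e (R : realType) n (f : 'I_n.+1 -> 'cV[R]_n.+1) i :
  (rowsmx f)^T *m e_ R i = f i.
Proof. by rewrite /e_ -colE; apply/matrixP => a b; rewrite (ord1 b) !mxE. Qed.

Section RotationCurve.
Variables (R : realType) (n : nat) (X : 'M[R]_n.+1) (s : R) (k : 'I_n).
Hypotheses (ellX : ellE X) (s_sign : s = 1 \/ s = -1).
Local Notation B u v := (qform u X v).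
Local Notation e := (e_ R).

Let s_sqr : s * s = 1.
Proof. by case: s_sign => ->; rewrite ?mulr1 ?mulrNN ?mulr1. Qed.
Let symX : Defs.symmetric X := ellE_sym ellX.
Let BC u v : B u v = B v u := qformC u v symX.
Let X1 i : X i i = 1 := proj2 ellX i.
Let XC i j : X j i = X i j := ellE_symE i j ellX.

Definition yk : 'cV[R]_n.+1 := e (idx k) - X ord0 (idx k) *: e ord0.
Definition hk : R := B yk yk.
Definition wv (j : 'I_n) : 'cV[R]_n.+1 := e ord0 + s *: e (idx j).
Definition slope j : R := B yk (wv j) / B (e ord0) (wv j).
Definition eta (i : 'I_n.+1) : 'cV[R]_n.+1 :=
  if unlift ord0 i is Some j then s *: (slope j *: wv j - yk) else yk.
Definition rot t := rowsmx (fun i => rcos hk t *: e i + rsin hk t *: eta i).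
Definition curve t := rot t *m X *m (rot t)^T.
Definition tangent : 'M[R]_n.+1 := \matrix_(i, j) (B (e i) (eta j) + B (eta i) (e j)).
Definition eta_gram : 'M[R]_n.+1 := \matrix_(i, j) B (eta i) (eta j).

Lemma B_e0_yk : B (e ord0) yk = 0.
Proof. by rewrite /yk qformBr qformZr !qform_e X1 mulr1 subrr. Qed.

Lemma hk_ge0 : 0 <= hk.
Proof. by case: ellX => [[_ X_ge0] _]; apply: X_ge0. Qed.

Lemma B_e0_wv j : B (e ord0) (wv j) = 1 + s * X ord0 (idx j).
Proof. by rewrite /wv qformDr qformZr !qform_e X1. Qed.

Lemma B_wv_wv j : B (wv j) (wv j) = 2 * B (e ord0) (wv j).
Proof.
rewrite B_e0_wv /wv !qformDl !qformDr !qformZl !qformZr !qform_e !X1 XC.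
by rewrite mulrA s_sqr; ring.
Qed.

Lemma B_yk_wv j : B yk (wv j) = s * B yk (e (idx j)).
Proof. by rewrite /wv qformDr qformZr BC B_e0_yk add0r. Qed.

Lemma slopeP j : slope j * B (e ord0) (wv j) = B yk (wv j).
Proof.
rewrite /slope; have [p0|p_neq0] := eqVneq (B (e ord0) (wv j)) 0; last by rewrite divfK.
(* if the denominator vanishes then [slope j = 0] (division by 0), and [wv j] is isotropic *)
rewrite p0 mulr0; apply/esym/(psd_qform0 (proj1 ellX)).
by rewrite B_wv_wv p0 mulr0.
Qed.

Lemma B_e_eta i : B (e i) (eta i) = 0.
Proof.
rewrite /eta; case: (unliftP ord0 i) => [j ->|->]; last by rewrite B_e0_yk.
have B_ej_wv : B (e (idx j)) (wv j) = s * B (e ord0) (wv j).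
  rewrite B_e0_wv /wv qformDr qformZr !qform_e X1 XC.
  by rewrite mulrDr mulr1 mulrA s_sqr mul1r addrC.
rewrite qformZr qformBr qformZr B_ej_wv mulrCA slopeP B_yk_wv mulrA s_sqr mul1r.
by rewrite BC subrr mulr0.
Qed.

Lemma B_eta_eta i : B (eta i) (eta i) = hk.
Proof.
rewrite /eta; case: (unliftP ord0 i) => [j _|_] //.
rewrite qformZl qformZr mulrA s_sqr mul1r (qformBl _ yk) !(qformBr _ _ _ yk) !qformZl !qformZr.
rewrite B_wv_wv (BC (wv j) yk) -slopeP -/hk; ring.
Qed.

Lemma rotT_e t i : (rot t)^T *m e i = rcos hk t *: e i + rsin hk t *: eta i.
Proof. exact: rowsmxT_e. Qed.

Lemma curve_e t i j :
  curve t i j = B (rcos hk t *: e i + rsin hk t *: eta i) (rcos hk t *: e j + rsin hk t *: eta j).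
Proof. by rewrite -qform_e /curve qform_congr !rotT_e. Qed.

Lemma curve_ellE t : ellE (curve t).
Proof.
split; [split|] => [|v|i].
- by rewrite /Defs.symmetric /curve !trmx_mul trmxK symX mulmxA.
- by rewrite /curve qform_congr; case: ellX => [[_ X_ge0] _]; apply: X_ge0.
rewrite curve_e !qformDl !qformDr !qformZl !qformZr qform_e X1 B_e_eta BC B_e_eta.
by rewrite B_eta_eta -[RHS](rcos_rsin hk_ge0 t); ring.
Qed.

Lemma rotT_wv t j :
  (rot t)^T *m wv j = (rcos hk t + rsin hk t * slope j) *: wv j.
Proof.
rewrite {1}/wv mulmxDr -scalemxAr !rotT_e /eta unlift_none liftK.
apply/matrixP => a b; rewrite !mxE.
by case: s_sign => ->; ring.
Qed.

Lemma qform_curve_wv t i j : qform (wv i) (curve t) (wv j) =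
  (rcos hk t + rsin hk t * slope i) * (rcos hk t + rsin hk t * slope j) * B (wv i) (wv j).
Proof. by rewrite /curve qform_congr !rotT_wv qformZl qformZr mulrA. Qed.

Lemma curve_subE t :
  curve t - X = (rcos hk t * rsin hk t) *: tangent + rsin hk t ^+ 2 *: (eta_gram - hk *: X).
Proof.
apply/matrixP => i j; rewrite [LHS]mxE curve_e !mxE.
rewrite !qformDl !qformDr !qformZl !qformZr qform_e.
have := rcos_rsin hk_ge0 t; set c := rcos hk t; set r := rsin hk t => circle.
rewrite -[M in _ - M = _]mul1r -circle; ring.
Qed.

Lemma tangent_sym : Defs.symmetric tangent.
Proof. by apply/matrixP => i j; rewrite !mxE addrC (BC (e j)) (BC (eta j)). Qed.

Lemma tangent_0k : tangent ord0 (idx k) = 2 * (1 - X ord0 (idx k) ^+ 2).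
Proof.
rewrite mxE /eta unlift_none liftK qformZr qformBr qformZr slopeP B_yk_wv.
rewrite B_e0_yk subr0 mulrA s_sqr mul1r /yk qformBl qformZl !qform_e X1 XC.
by rewrite expr2; ring.
Qed.

Lemma curve_not_vertex (C : 'M[R]_n.+1 -> Prop) d : 0 < d ->
  (forall t, `|t| <= d -> C (curve t)) -> X ord0 (idx k) ^+ 2 != 1 ->
  ~ full_dim (normal_cone C X).
Proof.
move=> d_gt0 C_curve x0k_neq1 full.
suff D0 : tangent = 0.
  have := tangent_0k; rewrite D0 mxE => /esym /eqP.
  rewrite mulf_eq0 pnatr_eq0 subr_eq0 /= => /eqP x0k_eq1.
  by rewrite -x0k_eq1 eqxx in x0k_neq1.
apply: (full_dim_normal_orth full tangent_sym) => c [_ c_normal].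
apply: (rotation_first_order hk_ge0 (G := tip c (eta_gram - hk *: X)) d_gt0) => t t_le.
by rewrite -!tipZr -tipDr -curve_subE tipBr subr_le0; apply/c_normal/C_curve.
Qed.

Definition curve_radius : R := (1 + hk + 2 * \sum_l `|slope l|)^-1.

Lemma curve_radius_gt0 : 0 < curve_radius.
Proof.
have : 0 <= \sum_l `|slope l| by apply: sumr_ge0.
by rewrite invr_gt0; have := hk_ge0; lra.
Qed.

Lemma qform_curve_wv_ge0 t i j : `|t| <= curve_radius ->
  0 <= B (wv i) (wv j) -> 0 <= qform (wv i) (curve t) (wv j).
Proof.
move=> t_le Bij_ge0.
have den_gt0 : 0 < 1 + hk + 2 * \sum_l `|slope l|.
  by have := curve_radius_gt0; rewrite invr_gt0.
have gamma_ge0 l : 0 <= rcos hk t + rsin hk t * slope l.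
  apply: (rcosD_rsin_ge0 hk_ge0).
  have slope_le : `|slope l| <= \sum_m `|slope m|.
    by rewrite (bigD1 l) //= lerDl sumr_ge0.
  apply: le_trans (_ : `|t| * (1 + hk + 2 * \sum_m `|slope m|) <= _).
    by rewrite ler_wpM2l //; lra.
  by rewrite -[leRHS](mulVf (lt0r_neq0 den_gt0)) ler_wpM2r ?(ltW den_gt0).
by rewrite qform_curve_wv !mulr_ge0.
Qed.

End RotationCurve.

Lemma vertex_row0_sqr (R : realType) n (C : 'M[R]_n.+1 -> Prop) X :
  (C = @ellE R n \/ C = @ellE' R n \/ C = @ellE'' R n) ->
  vertex C X -> forall j, X ord0 (idx j) ^+ 2 = 1.
Proof.
move=> C_cases [CX full] k; apply/eqP/negPn/negP => x0k_neq1.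
have sign1 : (1 : R) = 1 \/ (1 : R) = -1 by left.
have signN1 : (-1 : R) = 1 \/ (-1 : R) = -1 by right.
case: C_cases CX full => [|[|]] -> CX.
- by apply: (curve_not_vertex CX sign1 ltr01 _ x0k_neq1) => t _; apply: curve_ellE.
- have ellX := proj1 CX.
  apply: (curve_not_vertex ellX sign1 (curve_radius_gt0 1 k ellX) _ x0k_neq1).
  move=> t t_le; split=> [|i j ij]; first exact: curve_ellE.
  have := qform_curve_wv_ge0 ellX sign1 (i := i) (j := j) t_le; rewrite /wv !scale1r.
  by apply; apply: (proj2 CX).
- have ellX := proj1 CX.
  apply: (curve_not_vertex ellX signN1 (curve_radius_gt0 (-1) k ellX) _ x0k_neq1).
  move=> t t_le; split=> [|i j ij]; first exact: curve_ellE.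
  have := qform_curve_wv_ge0 ellX signN1 (i := i) (j := j) t_le; rewrite /wv !scaleN1r.
  by apply; apply: (proj2 CX).
Qed.

Unset Implicit Arguments.

Theorem corollary3p4 (R : realType) (n : nat) (C : 'M[R]_(n.+1) -> Prop) :
  (C = @ellE R n \/ C = @ellE' R n \/ C = @ellE'' R n) ->
  (forall X : 'M[R]_(n.+1), C X -> (vertex C X <-> \rank X = 1%N)) /\
  (forall X : 'M[R]_(n.+1),
     vertex C X <->
     exists S : {set 'I_n}, X = one_plus_xS R S *m (one_plus_xS R S)^T).
Proof.
move=> C_cases.
have C_ellE Z : C Z -> ellE Z by case: C_cases => [|[|]] -> // [].
have C_cutm S : C (cutm R S).
  by case: C_cases => [|[|]] ->; [apply: cutm_ellE|apply: cutm_ellE'|apply: cutm_ellE''].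
have vertex_cutm X : vertex C X -> X = cutm R [set j | X ord0 (idx j) == 1].
  by move=> vX; apply: ellE_cutm (C_ellE _ vX.1) (vertex_row0_sqr C_cases vX).
split=> X; last first.
  by split=> [vX|[S ->]]; [exists [set j | X ord0 (idx j) == 1]; apply: vertex_cutm|apply: cutm_vertex].
move=> CX; split=> [/vertex_cutm ->|rankX]; first exact: rank_cutm.
rewrite (ellE_cutm (C_ellE _ CX) (rank1_ellE_row0_sqr (C_ellE _ CX) rankX)).
exact: cutm_vertex.
Qed.
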